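(* Assume $\mathsf U_k^n\in\mathcal B(b)$ for all $k\in\mathcal V$ and fix $i\in\mathcal V$. (i) For $j\in\mathcal I(i)$, the density $\rho(x,t)$ of the solution of the extended Riemann problem with left data $(\varrho_i^n,\mathsf M_i^n\cdot\mathbf n_{ij},\mathcal E_i^n,\Gamma_i^n)^{\mathsf T}$ and right data $(\varrho_j^n,\mathsf M_j^n\cdot\mathbf n_{ij},\mathcal E_j^n,\Gamma_j^n)^{\mathsf T}$ satisfies, for all $x$ and $t>0$, $$\rho(x,t)\le\max_{Z\in\{i,j\}}\frac{1}{\tau_Z^\infty}=\max_{Z\in\{i,j\}}\frac{(\gamma_Z^n+1)\varrho_Z^n}{(\gamma_Z^n-1)+2b\varrho_Z^n},\qquad \tau_Z^\infty:=\frac{(\gamma_Z^n-1)/\varrho_Z^n+2b}{\gamma_Z^n+1}.$$ (ii) Under the CFL condition $\tau\sum_{j\in\mathcal I(i)\setminus\{i\}}\frac{2d_{ij}^{\mathrm L,n}}{m_i}\le1$, the density $\varrho_i^{\mathrm L,n+1}$ of the low-order update satisfies $$\varrho_i^{\mathrm L,n+1}\le\frac{(\gamma_i^{\min,n}+1)\varrho_i^{\max,n}}{(\gamma_i^{\min,n}-1)+2b\varrho_i^{\max,n}}.$$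
   Context: Let $d\ge1$, $b\ge0$. For $\mathbf u=(\rho,\mathbf m,E)\in\mathbb R^{d+2}$ with $\rho>0$ put $\mathbf v=\mathbf m/\rho$, $e(\mathbf u)=E/\rho-\tfrac12\|\mathbf v\|^2$. Admissible set: $\mathcal B(b)=\{\rho>0,\ 1-b\rho>0,\ e(\mathbf u)>0\}$. A pressure oracle $p:\mathcal B(b)\to[0,\infty)$ is an arbitrary given function; flux $\mathbb f(\mathbf u)=(\mathbf m,\ \mathbf v\otimes\mathbf m+p(\mathbf u)\mathbb I_d,\ \mathbf v(E+p(\mathbf u)))^{\mathsf T}$. Discretization: finite index set $\mathcal V$; for each $i$ a stencil $\mathcal I(i)\ni i$; lumped masses $m_i>0$; vectors $\mathbf c_{ij}\in\mathbb R^d$ with $\mathbf c_{ij}=-\mathbf c_{ji}$, $\sum_{j\in\mathcal I(i)}\mathbf c_{ij}=\mathbf 0$, nonzero for $j\neq i$, $\mathbf n_{ij}=\mathbf c_{ij}/\|\mathbf c_{ij}\|$; time step $\tau>0$; states $\mathsf U_k^n=(\varrho_k^n,\mathsf M_k^n,\mathsf E_k^n)$. For each $k$: $\mathsf p_k^n=p(\mathsf U_k^n)$, $\mathsf e_k^n=e(\mathsf U_k^n)$, $\gamma_k^n=1+\frac{\mathsf p_k^n(1-b\varrho_k^n)}{\varrho_k^n\mathsf e_k^n}$, $\Gamma_k^n=\varrho_k^n\gamma_k^n$; for the pair $(i,j)$ and $Z\in\{i,j\}$, $\mathcal E_Z^n=\mathsf E_Z^n-\frac{\|\mathsf M_Z^n-(\mathsf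 M_Z^n\cdot\mathbf n_{ij})\mathbf n_{ij}\|^2}{2\varrho_Z^n}$. Extended Riemann problem: the 1D system $\partial_t(\rho,m,\mathcal E,\Gamma)^{\mathsf T}+\partial_x(m,\ m^2/\rho+p_{\rm cov},\ \frac m\rho(\mathcal E+p_{\rm cov}),\ \frac m\rho\Gamma)^{\mathsf T}=0$, $p_{\rm cov}=\frac{\Gamma/\rho-1}{1-b\rho}(\mathcal E-\frac{m^2}{2\rho})$, with left data on $x<0$, right data on $x>0$. Let $\lambda(\mathbf n_{ij},\mathsf U_i^n,\mathsf U_j^n)$ be its maximum wave speed and $\widehat\lambda(\cdot)\ge\lambda(\cdot)$ any positive upper bound. For $j\ne i$: $d_{ij}^{\mathrm L,n}=\max(\widehat\lambda(\mathbf n_{ij},\mathsf U_i^n,\mathsf U_j^n)\|\mathbf c_{ij}\|,\widehat\lambda(\mathbf n_{ji},\mathsf U_j^n,\mathsf U_i^n)\|\mathbf c_{ji}\|)$. Low-order update $\mathsf U_i^{\mathrm L,n+1}$ (with density $\varrho_i^{\mathrm L,n+1}$): $\frac{m_i}{\tau}(\mathsf U_i^{\mathrm L,n+1}-\mathsf U_i^n)+\sum_{j\in\mathcal I(i)}\mathbb f(\mathsf U_j^n)\mathbf c_{ij}-\sum_{j\in\mathcal I(i)\setminus\{i\}}d_{ij}^{\mathrm L,n}(\mathsf U_j^n-\mathsf U_i^n)=0$. Auxiliary states: for $j\neq i$, $\overline{\mathsf U}_{ij}^n=\tfrac12(\mathsf U_i^n+\mathsf U_j^n)-\frac{1}{2d_{ij}^{\mathrm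 L,n}}(\mathbb f(\mathsf U_j^n)-\mathbb f(\mathsf U_i^n))\mathbf c_{ij}$, and $\overline{\mathsf U}_{ii}^n:=\mathsf U_i^n$; $\overline\varrho_{ij}^n$ denotes the density of $\overline{\mathsf U}_{ij}^n$. Set $\varrho_i^{\max,n}=\max_{j\in\mathcal I(i)}\overline\varrho_{ij}^n$ and $\gamma_i^{\min,n}=\min_{j\in\mathcal I(i)}\gamma_j^n$. *)

From HB Require Import structures.
From mathcomp Require Import all_boot all_order all_algebra.
From mathcomp Require Import reals exp.
Set Implicit Arguments. Unset Strict Implicit. Unset Printing Implicit Defensive.
Import Order.TTheory GRing.Theory Num.Theory.
Local Open Scope ring_scope.

Section Defs.
Variable R : realType.

Definition vec (d : nat) := 'I_d -> R.
Definition dotv d (a c : vec d) : R := \sum_(k < d) a k * c k.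
Definition normv d (a : vec d) : R := Num.sqrt (dotv a a).

Record state (d : nat) := State { st_rho : R; st_M : vec d; st_E : R }.

Definition int_energy d (U : state d) : R :=
  st_E U / st_rho U - (dotv (st_M U) (st_M U) / (st_rho U ^+ 2)) / 2.

Definition admissible (b : R) d (U : state d) : Prop :=
  0 < st_rho U /\ 0 < 1 - b * st_rho U /\ 0 < int_energy U.

Definition gam (b : R) d (p : state d -> R) (U : state d) : R :=
  1 + p U * (1 - b * st_rho U) / (st_rho U * int_energy U).

Record xstate := XState { x_rho : R; x_m : R; x_E : R; x_G : R }.

Definition ext_of (b : R) d (p : state d -> R) (nv : vec d) (U : state d) : xstate :=
  let mn := dotv (st_M U) nv in
  let w : vec d := fun k => st_M U k - mn * nv k in
  XState (st_rho U) mn (st_E U - dotv w w / (2 * st_rho U))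
         (st_rho U * gam b p U).

Definition x_u (W : xstate) : R := x_m W / x_rho W.
Definition x_g (W : xstate) : R := x_G W / x_rho W.
Definition x_p (b : R) (W : xstate) : R :=
  (x_g W - 1) / (1 - b * x_rho W) * (x_E W - x_m W ^+ 2 / (2 * x_rho W)).

Definition csnd (b r pr g : R) : R := Num.sqrt (g * pr / (r * (1 - b * r))).

(* wave curve f_Z(P) (shock branch for P > p_Z, rarefaction otherwise) *)
Definition fwave (b r pr g P : R) : R :=
  if pr < P then
    (P - pr) * Num.sqrt ((2 * (1 - b * r) / ((g + 1) * r)) / (P + (g - 1) / (g + 1) * pr))
  else
    2 * csnd b r pr g * (1 - b * r) / (g - 1) * ((P / pr) `^ ((g - 1) / (2 * g)) - 1).

(* density behind the wave connecting (r, pr) to pressure P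
   (Rankine-Hugoniot for P > pr, isentrope p (tau - b)^g = const otherwise) *)
Definition rho_star (b r pr g P : R) : R :=
  (b + (r^-1 - b) *
     (if pr < P then ((g + 1) * pr + (g - 1) * P) / ((g + 1) * P + (g - 1) * pr)
      else (pr / P) `^ (g^-1)))^-1.

Definition qshock (b r pr g P : R) : R :=
  Num.sqrt ((P + (g - 1) / (g + 1) * pr) / (2 * (1 - b * r) / ((g + 1) * r))).

Definition p_isen (b r pr g rr : R) : R := pr * ((r^-1 - b) / (rr^-1 - b)) `^ g.

(* v is the density of the 1-rarefaction fan (left state (r,u,pr,g)) at xi *)
Definition fanL (b r u pr g xi v : R) : Prop :=
  let cf := csnd b v (p_isen b r pr g v) g in
  let uf := u + 2 / (g - 1) * (csnd b r pr g * (1 - b * r) - cf * (1 - b * v)) in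
  uf - cf = xi.

(* v is the density of the 3-rarefaction fan (right state (r,u,pr,g)) at xi *)
Definition fanR (b r u pr g xi v : R) : Prop :=
  let cf := csnd b v (p_isen b r pr g v) g in
  let uf := u - 2 / (g - 1) * (csnd b r pr g * (1 - b * r) - cf * (1 - b * v)) in
  uf + cf = xi.

(* value v at xi = x/t on the left of the contact (speed ustar), star pressure P *)
Definition left_wave (b r u pr g P ustar xi v : R) : Prop :=
  let rs := rho_star b r pr g P in
  if pr < P then
    let S := u - qshock b r pr g P / r in
    (xi <= S /\ v = r) \/ (S <= xi <= ustar /\ v = rs)
  else
    let hd := u - csnd b r pr g in
    let tl := ustar - csnd b rs P g in
    [\/ xi <= hd /\ v = r,
        (hd <= xi <= tl) /\ (rs <= v <= r) /\ fanL b r u pr g xi v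
      | tl <= xi <= ustar /\ v = rs].

Definition right_wave (b r u pr g P ustar xi v : R) : Prop :=
  let rs := rho_star b r pr g P in
  if pr < P then
    let S := u + qshock b r pr g P / r in
    (S <= xi /\ v = r) \/ (ustar <= xi <= S /\ v = rs)
  else
    let hd := u + csnd b r pr g in
    let tl := ustar + csnd b rs P g in
    [\/ hd <= xi /\ v = r,
        (tl <= xi <= hd) /\ (rs <= v <= r) /\ fanR b r u pr g xi v
      | ustar <= xi <= tl /\ v = rs].

Definition nondeg (b : R) (W : xstate) : Prop :=
  [/\ 0 < x_rho W, 0 < 1 - b * x_rho W, 0 < x_p b W & 1 < x_g W].

Definition escape (b : R) (W : xstate) : R :=
  2 * csnd b (x_rho W) (x_p b W) (x_g W) * (1 - b * x_rho W) / (x_g W - 1).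

Definition no_vacuum (b : R) (WL WR : xstate) : Prop :=
  x_u WR - x_u WL < escape b WL + escape b WR.

Definition star_pressure (b : R) (WL WR : xstate) (P : R) : Prop :=
  0 < P /\
  fwave b (x_rho WL) (x_p b WL) (x_g WL) P + fwave b (x_rho WR) (x_p b WR) (x_g WR) P
    + x_u WR - x_u WL = 0.

Definition ustar (b : R) (WL WR : xstate) (P : R) : R :=
  (x_u WL + x_u WR) / 2 +
  (fwave b (x_rho WR) (x_p b WR) (x_g WR) P - fwave b (x_rho WL) (x_p b WL) (x_g WL) P) / 2.

Definition dens_novac (b : R) (WL WR : xstate) (P xi v : R) : Prop :=
  left_wave b (x_rho WL) (x_u WL) (x_p b WL) (x_g WL) P (ustar b WL WR P) xi v \/
  right_wave b (x_rho WR) (x_u WR) (x_p b WR) (x_g WR) P (ustar b WL WR P) xi v.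

Definition dens_vac (b : R) (WL WR : xstate) (xi v : R) : Prop :=
  let rL := x_rho WL in let uL := x_u WL in let pL := x_p b WL in let gL := x_g WL in
  let rR := x_rho WR in let uR := x_u WR in let pR := x_p b WR in let gR := x_g WR in
  let hL := uL - csnd b rL pL gL in let aL := uL + escape b WL in
  let hR := uR + csnd b rR pR gR in let aR := uR - escape b WR in
  (xi <= hL /\ v = rL) \/
  ((hL <= xi <= aL) /\ (0 < v <= rL) /\ fanL b rL uL pL gL xi v) \/
  (aL <= xi <= aR /\ v = 0) \/
  ((aR <= xi <= hR) /\ (0 < v <= rR) /\ fanR b rR uR pR gR xi v) \/
  (hR <= xi /\ v = rR).

Definition riemann_density (b : R) (WL WR : xstate) (rho : R -> R -> R) : Prop :=
  nondeg b WL /\ nondeg b WR /\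
  ((no_vacuum b WL WR /\ exists P, star_pressure b WL WR P /\
      forall x t, 0 < t -> dens_novac b WL WR P (x / t) (rho x t))
   \/ (~ no_vacuum b WL WR /\
      forall x t, 0 < t -> dens_vac b WL WR (x / t) (rho x t))).

Definition riemann_maxspeed (b : R) (WL WR : xstate) (lam : R) : Prop :=
  let rL := x_rho WL in let uL := x_u WL in let pL := x_p b WL in let gL := x_g WL in
  let rR := x_rho WR in let uR := x_u WR in let pR := x_p b WR in let gR := x_g WR in
  nondeg b WL /\ nondeg b WR /\
  ((no_vacuum b WL WR /\ exists P, star_pressure b WL WR P /\
      let l1 := if pL < P then uL - qshock b rL pL gL P / rL else uL - csnd b rL pL gL in
      let l3 := if pR < P then uR + qshock b rR pR gR P / rR else uR + csnd b rR pR gR in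
      lam = Num.max (Num.max 0 (- l1)) (Num.max 0 l3))
   \/ (~ no_vacuum b WL WR /\
      lam = Num.max (Num.max 0 (- (uL - csnd b rL pL gL))) (Num.max 0 (uR + csnd b rR pR gR)))).

Definition nij d (c : vec d) : vec d := fun k => c k / normv c.

Definition dLow d (V : Type) (lamhat : vec d -> state d -> state d -> R)
  (c : V -> V -> vec d) (U : V -> state d) (i j : V) : R :=
  Num.max (lamhat (nij (c i j)) (U i) (U j) * normv (c i j))
          (lamhat (nij (c j i)) (U j) (U i) * normv (c j i)).

(* density of the auxiliary state bar U_ij (flux first row is m, so f(U) c = M . c) *)
Definition rhobar d (V : eqType) (lamhat : vec d -> state d -> state d -> R)
  (c : V -> V -> vec d) (U : V -> state d) (i j : V) : R :=
  if j == i then st_rho (U i) else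
  (st_rho (U i) + st_rho (U j)) / 2
  - (dotv (st_M (U j)) (c i j) - dotv (st_M (U i)) (c i j)) / (2 * dLow lamhat c U i j).

Definition rho_lim (b g r : R) : R := (g + 1) * r / ((g - 1) + 2 * b * r).
Definition tau_inf (b g r : R) : R := ((g - 1) / r + 2 * b) / (g + 1).

End Defs.

(* (i) Every value of the exact density is a data density, a star density, a
   density inside a rarefaction fan (at most the density the fan starts from) or
   0 in a vacuum.  A star density equals [1 / (b + (1/rho - b) X)], where the
   covolume ratio X across the wave is at least the strong-shock limit
   (gamma - 1) / (gamma + 1); this is exactly [rho_star <= 1 / tau^infty].
   (ii) As the [c_ij] sum to zero, the low-order update reads
   [rho^L = rho_i + tau / m_i * sum_j 2 d_ij (rhobar_ij - rho_i)], a convex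
   combination under the CFL condition, so [rho^L <= rho^max].  The bound then
   follows from [b rho^max <= 1].  With [lam = d_ij / |c_ij|], at least the
   maximal wave speed, [rhobar_ij = (rho_i (lam + u_i) + rho_j (lam - u_j)) / (2 lam)];
   each wave curve gives [b rho_Z (lam -+ u_Z) <= (lam -+ u_Z) - f_Z(p_star)], and the
   star-pressure equation [f_L(p_star) + f_R(p_star) + u_R - u_L = 0] makes the sum at
   most [2 lam].  The maximal wave speed exists because the star pressure does,
   by the intermediate value theorem. *)

From HB Require Import structures.
From mathcomp Require Import all_boot all_order all_algebra.
From mathcomp Require Import reals exp boolp classical_sets topology normedtype derive realfun.
From mathcomp Require Import ring lra.
Set Implicit Arguments. Unset Strict Implicit. Unset Printing Implicit Defensive.
Import Order.TTheory GRing.Theory Num.Theory.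
Import numFieldNormedType.Exports.
Local Open Scope ring_scope.

Section CovolumeGas.
Variables (R : realType) (b : R).
Hypothesis b_ge0 : 0 <= b.
Implicit Types (r pr g P u y : R).

Lemma tau_inf_eq g r : 0 < r -> 1 < g ->
  tau_inf b g r = b + (r^-1 - b) * ((g - 1) / (g + 1)).
Proof. by move=> r0 g1; rewrite /tau_inf; field; rewrite !gt_eqF //; lra. Qed.

Lemma tau_infV g r : 0 < r -> 1 < g -> (tau_inf b g r)^-1 = rho_lim b g r.
Proof.
move=> r0 g1; have := mulr_ge0 b_ge0 (ltW r0).
by rewrite /tau_inf /rho_lim => br0; field; rewrite !gt_eqF //; lra.
Qed.

Lemma rho_lim_ge g r : 0 < r -> b * r <= 1 -> 1 < g -> r <= rho_lim b g r.
Proof.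
move=> r0 br g1; have br0 := mulr_ge0 b_ge0 (ltW r0).
rewrite /rho_lim -subr_ge0.
have -> : (g + 1) * r / (g - 1 + 2 * b * r) - r = 2 * r * (1 - b * r) / (g - 1 + 2 * b * r).
  by field; rewrite gt_eqF //; lra.
by apply: divr_ge0; [apply: mulr_ge0; lra | lra].
Qed.

(* The right-hand side is the covolume ratio across the wave in [rho_star]. *)
Lemma rho_star_ratio_ge pr g P : 0 < pr -> 1 < g -> 0 < P ->
  (g - 1) / (g + 1) <= (if pr < P then ((g + 1) * pr + (g - 1) * P) / ((g + 1) * P + (g - 1) * pr)
                        else (pr / P) `^ (g^-1)).
Proof.
move=> pr0 g1 P0; case: ifP => [_|/negbT]; last first.
  rewrite -leNgt => Ppr; apply: (@le_trans _ _ 1).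
    by rewrite ler_pdivrMr ?mul1r; lra.
  rewrite -(powRr0 (pr / P)); apply: ler_powR; last by rewrite invr_ge0; lra.
  by rewrite ler_pdivlMr // mul1r.
rewrite -subr_ge0.
have -> : ((g + 1) * pr + (g - 1) * P) / ((g + 1) * P + (g - 1) * pr) - (g - 1) / (g + 1)
    = 4 * g * pr / ((g + 1) * ((g + 1) * P + (g - 1) * pr)).
  by field; rewrite !gt_eqF //; nra.
by apply: divr_ge0; [|apply: mulr_ge0]; nra.
Qed.

Lemma rho_star_le r pr g P : 0 < r -> 0 < 1 - b * r -> 0 < pr -> 1 < g -> 0 < P ->
  rho_star b r pr g P <= rho_lim b g r.
Proof.
move=> r0 br pr0 g1 P0.
have rb : 0 < r^-1 - b.
  have -> : r^-1 - b = (1 - b * r) / r by field; rewrite gt_eqF.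
  exact: divr_gt0.
have ratio0 : 0 < (g - 1) / (g + 1) by apply: divr_gt0; lra.
have ratio_le := rho_star_ratio_ge pr0 g1 P0.
rewrite -tau_infV // tau_inf_eq // /rho_star lef_pV2 ?posrE ?lerD2l ?ler_pM2l //.
- by apply: (ltr_wpDl b_ge0); apply: mulr_gt0 => //; apply: lt_le_trans ratio_le.
- by apply: (ltr_wpDl b_ge0); apply: mulr_gt0.
Qed.

Lemma left_wave_le r u pr g P us xi v : 0 < r -> 0 < 1 - b * r -> 0 < pr -> 1 < g -> 0 < P ->
  left_wave b r u pr g P us xi v -> v <= rho_lim b g r.
Proof.
move=> r0 br pr0 g1 P0.
have star := rho_star_le r0 br pr0 g1 P0.
have rlim : r <= rho_lim b g r by apply: rho_lim_ge => //; lra.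
rewrite /left_wave; case: ifP => _ /=; first by case=> -[_ ->].
by case=> [[_ ->]|[_ [/andP [_ /le_trans->]]]|[_ ->]].
Qed.

Lemma right_wave_le r u pr g P us xi v : 0 < r -> 0 < 1 - b * r -> 0 < pr -> 1 < g -> 0 < P ->
  right_wave b r u pr g P us xi v -> v <= rho_lim b g r.
Proof.
move=> r0 br pr0 g1 P0.
have star := rho_star_le r0 br pr0 g1 P0.
have rlim : r <= rho_lim b g r by apply: rho_lim_ge => //; lra.
rewrite /right_wave; case: ifP => _ /=; first by case=> -[_ ->].
by case=> [[_ ->]|[_ [/andP [_ /le_trans->]]]|[_ ->]].
Qed.

Lemma riemann_density_le WL WR rho x t : riemann_density b WL WR rho -> 0 < t ->
  rho x t <= Num.max (rho_lim b (x_g WL) (x_rho WL)) (rho_lim b (x_g WR) (x_rho WR)).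
Proof.
move=> [[rL0 bL pL gL] [[rR0 bR pR gR] sol]] t0.
have limL : x_rho WL <= rho_lim b (x_g WL) (x_rho WL) by apply: rho_lim_ge => //; lra.
have limR : x_rho WR <= rho_lim b (x_g WR) (x_rho WR) by apply: rho_lim_ge => //; lra.
case: sol => [[_ [P [[P0 _] sol]]] | [_ sol]].
  by rewrite le_max; case: (sol x t t0) => [/left_wave_le | /right_wave_le] ->; rewrite ?orbT.
case: (sol x t t0) => [[_ ->] | [[_ [/andP [_ /le_trans->]]] |
  [[_ ->] | [[_ [/andP [_ /le_trans->]]] | [_ ->]]]]]; rewrite ?le_max ?limL ?limR ?orbT //.
by rewrite (le_trans (ltW rL0)).
Qed.

Lemma csnd_gt0 r pr g : 0 < r -> 0 < 1 - b * r -> 0 < pr -> 1 < g -> 0 < csnd b r pr g.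
Proof.
by move=> r0 br pr0 g1; rewrite sqrtr_gt0 divr_gt0 // mulr_gt0 //; lra.
Qed.

Lemma fwave_le0 r pr g P : 0 < r -> 0 < 1 - b * r -> 0 < pr -> 1 < g -> 0 < P -> P <= pr ->
  fwave b r pr g P <= 0.
Proof.
move=> r0 br pr0 g1 P0 Ppr; rewrite /fwave ltNge Ppr /=.
have c0 := csnd_gt0 r0 br pr0 g1.
apply: mulr_ge0_le0; first by apply: divr_ge0; [rewrite !mulr_ge0 //; lra | lra].
rewrite subr_le0 -[leRHS](powRr0 (P / pr)) ger_powR ?divr_gt0 ?divr_ge0 //; try lra.
by rewrite ler_pdivrMr // mul1r.
Qed.

Lemma shock_speed_bound r pr g P y : 0 < r -> 0 < 1 - b * r -> 0 < pr -> 1 < g -> pr < P ->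
  qshock b r pr g P / r <= y -> b * r * y <= y - fwave b r pr g P.
Proof.
move=> r0 br pr0 g1 prP qy.
set A := 2 * (1 - b * r) / ((g + 1) * r); set B := (g - 1) / (g + 1) * pr.
have A0 : 0 < A by rewrite divr_gt0 ?mulr_gt0 //; lra.
have B0 : 0 <= B by rewrite mulr_ge0 ?divr_ge0 //; lra.
set q := qshock b r pr g P.
have q0 : 0 < q by rewrite /q /qshock -/A -/B sqrtr_gt0 divr_gt0 //; lra.
have q2 : q ^+ 2 = (P + B) / A.
  by rewrite /q /qshock -/A -/B sqr_sqrtr // divr_ge0 //; lra.
have -> : fwave b r pr g P = (P - pr) / q.
  by rewrite /fwave prP -/A -/B -invf_div sqrtrV // divr_ge0 //; lra.
(* the Rankine-Hugoniot mass flux [q] satisfies [(1 - b r) q^2 >= (P - pr) r] *)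
have flux : (1 - b * r) * q ^+ 2 - (P - pr) * r = r * ((g - 1) * P + (g + 1) * pr) / 2.
  by rewrite q2 /A /B; field; rewrite !gt_eqF //; lra.
have : (P - pr) / q <= (1 - b * r) * (q / r).
  rewrite -subr_ge0.
  have -> : (1 - b * r) * (q / r) - (P - pr) / q = ((1 - b * r) * q ^+ 2 - (P - pr) * r) / (q * r).
    by field; rewrite !gt_eqF.
  rewrite flux !divr_ge0 ?mulr_ge0 //; try lra.
  by apply: addr_ge0; apply: mulr_ge0; lra.
have : (1 - b * r) * (q / r) <= (1 - b * r) * y by rewrite ler_wpM2l //; lra.
lra.
Qed.

Lemma wave_speed_bound r pr g P y : 0 < r -> 0 < 1 - b * r -> 0 < pr -> 1 < g -> 0 < P ->
  (if pr < P then qshock b r pr g P / r <= y else csnd b r pr g <= y) ->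
  b * r * y <= y - fwave b r pr g P.
Proof.
move=> r0 br pr0 g1 P0; case: ifPn => [|/negbTE]; first exact: shock_speed_bound.
rewrite ltNge => /negbFE Ppr cy.
have y0 : 0 <= y := le_trans (ltW (csnd_gt0 r0 br pr0 g1)) cy.
have := fwave_le0 r0 br pr0 g1 P0 Ppr; nra.
Qed.

Lemma escape_gt0 W : nondeg b W -> 0 < escape b W.
Proof.
case=> r0 br p0 g1; have := csnd_gt0 r0 br p0 g1.
by rewrite /escape => c0; rewrite divr_gt0 ?mulr_gt0 //; lra.
Qed.

Lemma riemann_maxspeed_covolume WL WR lam lam' :
  riemann_maxspeed b WL WR lam -> lam <= lam' ->
  b * (x_rho WL * (lam' + x_u WL) + x_rho WR * (lam' - x_u WR)) <= 2 * lam'.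
Proof.
move=> [ndL [ndR sol]]; have [rL0 bL pL gL] := ndL; have [rR0 bR pR gR] := ndR.
have speeds l1 l3 : Num.max (Num.max 0 (- l1)) (Num.max 0 l3) <= lam' -> - l1 <= lam' /\ l3 <= lam'.
  by rewrite !ge_max => /andP[/andP[_ ->] /andP[_ ->]].
case: sol => [[_ [P [[P0 star] ->]]] | [vac ->]] /speeds [l1 l3].
  (* summing the two bounds, the wave curves cancel by the star-pressure equation *)
  have := wave_speed_bound rL0 bL pL gL P0 (y := lam' + x_u WL)
    ltac:(by move: l1; case: ifP; lra).
  have := wave_speed_bound rR0 bR pR gR P0 (y := lam' - x_u WR)
    ltac:(by move: l3; case: ifP; lra).
  lra.
have := csnd_gt0 rL0 bL pL gL; have := csnd_gt0 rR0 bR pR gR.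
have := escape_gt0 ndL; have := escape_gt0 ndR.
move/negP: vac; rewrite /no_vacuum -leNgt => vac cR cL eR eL.
have : 0 <= (1 - b * x_rho WL) * (lam' + x_u WL) by rewrite mulr_ge0 //; lra.
have : 0 <= (1 - b * x_rho WR) * (lam' - x_u WR) by rewrite mulr_ge0 //; lra.
lra.
Qed.

End CovolumeGas.

Section StarPressure.
Variables (R : realType) (b : R).
Implicit Types (r pr g P K : R).

Lemma continuous_powR_at (e a : R) : 0 < a -> {for a, continuous (fun y : R => y `^ e)}.
Proof.
move=> a0; apply/differentiable_continuous/derivable1_diffP.
by apply: derivable_powR; rewrite in_itv /= andbT.
Qed.

(* The two branches of the wave curve vanish at [P = pr], so [fwave] is their
   sum evaluated at [min P pr] and [max P pr]. *)
Lemma continuous_fwave r pr g P : 0 < r -> 0 < 1 - b * r -> 0 < pr -> 1 < g -> 0 < P ->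
  {for P, continuous (fwave b r pr g)}.
Proof.
move=> r0 br pr0 g1 P0.
set K := 2 * csnd b r pr g * (1 - b * r) / (g - 1); set e := (g - 1) / (2 * g).
set A := 2 * (1 - b * r) / ((g + 1) * r); set B := (g - 1) / (g + 1) * pr.
have A0 : 0 < A by rewrite divr_gt0 ?mulr_gt0 //; lra.
have B0 : 0 <= B by rewrite mulr_ge0 ?divr_ge0 //; lra.
have -> : fwave b r pr g = fun Q => K * ((Num.min Q pr / pr) `^ e - 1)
                              + (Num.max Q pr - pr) * Num.sqrt (A / (Num.max Q pr + B)).
  apply: funext => Q; rewrite /fwave -/K -/e -/A -/B.
  case: ltP => [prQ | Qpr].
    by rewrite divff ?gt_eqF // powR1 subrr mulr0 add0r.
  by rewrite subrr mul0r addr0.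
have cmin : {for P, continuous (fun Q => Num.min Q pr)}.
  by apply: (@continuous_min _ _ id (fun=> pr)); [exact: cvg_id | exact: cst_continuous].
have cmax : {for P, continuous (fun Q => Num.max Q pr)}.
  by apply: (@continuous_max _ _ id (fun=> pr)); [exact: cvg_id | exact: cst_continuous].
apply: continuousD; apply: continuousM; first exact: cst_continuous.
- apply: continuousB; last exact: cst_continuous.
  apply: (@continuous_comp _ _ _ (fun Q => Num.min Q pr / pr) (fun y : R => y `^ e)).
    by apply: continuousM => //; exact: cst_continuous.
  by apply: continuous_powR_at; rewrite divr_gt0 // lt_min P0 pr0.
- by apply: continuousB => //; exact: cst_continuous.
- apply: (@continuous_comp _ _ _ (fun Q => A / (Num.max Q pr + B)) Num.sqrt); last exact: sqrt_continuous.
  apply: continuousM; first exact: cst_continuous.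
  apply: continuousV; last by apply: continuousD => //; exact: cst_continuous.
  by rewrite gt_eqF // ltr_wpDr // lt_max pr0 orbT.
Qed.

Lemma fwave_le_near0 r pr g s : 0 < r -> 0 < 1 - b * r -> 0 < pr -> 1 < g -> 0 < s ->
  exists2 P0, 0 < P0 & forall P, 0 < P <= P0 ->
    fwave b r pr g P <= 2 * csnd b r pr g * (1 - b * r) / (g - 1) * (s - 1).
Proof.
move=> r0 br pr0 g1 s0.
set e := (g - 1) / (2 * g); have e0 : 0 < e by rewrite divr_gt0 //; lra.
have K0 : 0 <= 2 * csnd b r pr g * (1 - b * r) / (g - 1).
  by have c0 := csnd_gt0 r0 br pr0 g1; rewrite divr_ge0 ?mulr_ge0 ?(ltW c0) //; lra.
exists (Num.min pr (pr * s `^ e^-1)); first by rewrite lt_min pr0 mulr_gt0 ?powR_gt0.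
move=> P /andP[P0]; rewrite le_min => /andP[Ppr Ps].
rewrite /fwave ltNge Ppr /= -/e ler_wpM2l // lerD2r.
have -> : s = (s `^ e^-1) `^ e by rewrite -powRrM mulVf ?gt_eqF // powRr1 // ltW.
apply: ge0_ler_powR; rewrite ?nnegrE ?powR_ge0 ?(ltW e0) //.
  by rewrite divr_ge0 // ltW.
by rewrite ler_pdivrMr // mulrC.
Qed.

Lemma fwave_unbounded r pr g K : 0 < r -> 0 < 1 - b * r -> 0 < pr -> 1 < g -> 0 <= K ->
  exists2 P1, pr < P1 & forall P, P1 <= P -> K <= fwave b r pr g P.
Proof.
move=> r0 br pr0 g1 K0.
set A := 2 * (1 - b * r) / ((g + 1) * r); set B := (g - 1) / (g + 1) * pr.
have A0 : 0 < A by rewrite divr_gt0 ?mulr_gt0 //; lra.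
have B0 : 0 <= B by rewrite mulr_ge0 ?divr_ge0 //; lra.
have KA : 0 <= 4 * K ^+ 2 / A by apply: divr_ge0; [rewrite mulr_ge0 ?sqr_ge0 | exact: ltW].
exists (2 * pr + B + 4 * K ^+ 2 / A); first lra.
move=> P P1P; have prP : pr < P by lra.
rewrite /fwave prP -/A -/B; set X := P + B.
have X0 : 0 < X by rewrite /X; lra.
have AX0 : 0 <= A / X by rewrite divr_ge0 ?ltW.
rewrite -ler_sqr ?nnegrE ?mulr_ge0 ?sqrtr_ge0 //; last lra.
rewrite exprMn sqr_sqrtr //.
have half : (X / 2) ^+ 2 <= (P - pr) ^+ 2 by rewrite ler_sqr ?nnegrE ?divr_ge0 /X; lra.
apply: le_trans (ler_wpM2r AX0 half).
have -> : (X / 2) ^+ 2 * (A / X) = X * A / 4 by field; rewrite gt_eqF.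
have -> : K ^+ 2 = 4 * K ^+ 2 / A * A / 4 by field; rewrite gt_eqF.
by rewrite ler_pM2r ?ler_wpM2r ?ltW //; [rewrite /X; lra | lra].
Qed.

Lemma star_pressure_exists WL WR : nondeg b WL -> nondeg b WR -> no_vacuum b WL WR ->
  exists P, star_pressure b WL WR P.
Proof.
move=> ndL ndR novac; have [rL0 bL pL gL] := ndL; have [rR0 bR pR gR] := ndR.
set fL := fwave b (x_rho WL) (x_p b WL) (x_g WL).
set fR := fwave b (x_rho WR) (x_p b WR) (x_g WR).
set du := x_u WR - x_u WL; set F := fun P => fL P + fR P + du.
set E := escape b WL + escape b WR.
have E0 : 0 < E by rewrite addr_gt0 ?escape_gt0.
set s := (E - du) / E.
have s0 : 0 < s by rewrite divr_gt0 // subr_gt0.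
have sE : escape b WL * s + escape b WR * s = E - du by rewrite -mulrDl mulrC divfK // gt_eqF.
have [P0L P0L0 smallL] := fwave_le_near0 rL0 bL pL gL s0.
have [P0R P0R0 smallR] := fwave_le_near0 rR0 bR pR gR s0.
set P0 := Num.min P0L P0R.
have P00 : 0 < P0 by rewrite lt_min P0L0.
have FP0 : F P0 <= 0.
  have := smallL P0; have := smallR P0.
  rewrite -/(escape b WL) -/(escape b WR) !mulrBr !mulr1 P00 !ge_min !lexx ?orbT /=.
  by rewrite /F /fL /fR => /(_ isT) hR /(_ isT) hL; move: sE; rewrite /E; lra.
have K0 : 0 <= Num.max 0 (- du) by rewrite le_max lexx.
have [P1L _ largeL] := fwave_unbounded rL0 bL pL gL K0.
have [P1R _ largeR] := fwave_unbounded rR0 bR pR gR (lexx 0).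
set P1 := Num.max P0 (Num.max P1L P1R).
have FP1 : 0 <= F P1.
  have := largeL P1; have := largeR P1; rewrite !le_max !lexx !orbT /=.
  have : - du <= Num.max 0 (- du) by rewrite le_max lexx orbT.
  by rewrite /F /fL /fR => ? /(_ isT) hR /(_ isT) hL; lra.
have P01 : P0 <= P1 by rewrite le_max lexx.
have F01 : Num.min (F P0) (F P1) <= 0 <= Num.max (F P0) (F P1).
  by rewrite ge_min le_max FP0 FP1 orbT.
have Fcont : {within `[P0, P1], continuous F}%classic.
  apply: continuous_in_subspaceT => x; rewrite inE /= in_itv /= => /andP[P0x _].
  have x0 : 0 < x := lt_le_trans P00 P0x.
  have : {for x, continuous (fun P : R => fL P + fR P + du)}.
    apply: continuousD; last exact: cst_continuous.
    by apply: continuousD; apply: continuous_fwave.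
  by [].
have [P /andP[P0P _] FP] := IVT P01 Fcont F01.
by exists P; split; [exact: lt_le_trans P00 P0P | move: FP; rewrite /F /fL /fR /du /=; lra].
Qed.

Lemma riemann_maxspeed_exists WL WR : nondeg b WL -> nondeg b WR ->
  exists lam, riemann_maxspeed b WL WR lam.
Proof.
move=> ndL ndR; case novac : (x_u WR - x_u WL < escape b WL + escape b WR).
  have [P star] := star_pressure_exists ndL ndR novac.
  eexists; split; first exact: ndL; split; first exact: ndR.
  by left; split => //; exists P; split; [exact: star | reflexivity].
eexists; split; first exact: ndL; split; first exact: ndR.
by right; split; [rewrite /no_vacuum novac | reflexivity].
Qed.
End StarPressure.

Section Vectors.
Variables (R : realType) (d : nat).
Implicit Types (a c M nv : vec R d).

Lemma dotvC a c : dotv a c = dotv c a.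
Proof. by apply: eq_bigr => k _; rewrite mulrC. Qed.

Lemma dotv_ge0 c : 0 <= dotv c c.
Proof. by apply: sumr_ge0 => k _; rewrite -expr2 sqr_ge0. Qed.

Lemma dotv_gt0 c : (exists q, c q != 0) -> 0 < dotv c c.
Proof.
case=> q cq; rewrite lt_def dotv_ge0 andbT; apply: contraNN cq => /eqP.
move/psumr_eq0P => /(_ (fun k _ => ltac:(by rewrite -expr2 sqr_ge0)) q isT) /eqP.
by rewrite mulf_eq0 orbb.
Qed.

Lemma dotv_nij M c : dotv M (nij c) = dotv M c / normv c.
Proof. by rewrite /dotv /nij mulr_suml; apply: eq_bigr => k _; rewrite mulrA. Qed.

Lemma normv_nij c : (exists q, c q != 0) -> normv (nij c) = 1.
Proof.
move=> /dotv_gt0 cc; have N0 : 0 < normv c by rewrite sqrtr_gt0.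
rewrite /normv dotv_nij dotvC dotv_nij -/(normv c) -mulrA -invfM -expr2.
by rewrite sqr_sqrtr ?ltW // divff ?gt_eqF // sqrtr1.
Qed.

Lemma dotv_unit nv : normv nv = 1 -> dotv nv nv = 1.
Proof. by move=> n1; rewrite -[LHS]sqr_sqrtr ?dotv_ge0 // -/(normv nv) n1 expr1n. Qed.

Lemma dotv_tangential M nv : dotv nv nv = 1 ->
  dotv (fun k => M k - dotv M nv * nv k) (fun k => M k - dotv M nv * nv k)
  = dotv M M - dotv M nv ^+ 2.
Proof.
move=> n1.
have expand (a : R) : dotv (fun k => M k - a * nv k) (fun k => M k - a * nv k)
                = dotv M M - 2 * a * dotv M nv + a ^+ 2 * dotv nv nv.
  rewrite /dotv !mulr_sumr -sumrB -big_split /=.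
  by apply: eq_bigr => k _; ring.
by rewrite expand n1; ring.
Qed.

Variables (b : R) (p : state R d -> R).
Implicit Type U : state R d.

Lemma ext_of_g nv U : st_rho U != 0 -> x_g (ext_of b p nv U) = gam b p U.
Proof. by move=> r0; rewrite /x_g /=; field. Qed.

Lemma ext_of_p nv U : dotv nv nv = 1 -> admissible b U -> x_p b (ext_of b p nv U) = p U.
Proof.
move=> n1 [r0 [br e0]]; rewrite /x_p ext_of_g ?gt_eqF // /= dotv_tangential //.
move: e0; rewrite /gam /int_energy => e0.
field; rewrite !gt_eqF //=.
have -> : st_E U * (st_rho U * 2) - dotv (st_M U) (st_M U)
  = 2 * st_rho U ^+ 2 * (st_E U / st_rho U - dotv (st_M U) (st_M U) / st_rho U ^+ 2 / 2).
  by field; rewrite gt_eqF.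
by rewrite !mulr_gt0 ?exprn_gt0.
Qed.

Lemma gam_gt1 U : admissible b U -> 0 < p U -> 1 < gam b p U.
Proof.
move=> [r0 [br e0]] p0; rewrite /gam -ltrBlDl subrr.
by rewrite divr_gt0 ?mulr_gt0.
Qed.

Lemma ext_of_nondeg nv U : dotv nv nv = 1 -> admissible b U -> 0 < p U ->
  nondeg b (ext_of b p nv U).
Proof.
move=> n1 adm p0; have [r0 [br _]] := adm.
by split; rewrite /= ?ext_of_p ?ext_of_g ?gt_eqF ?gam_gt1.
Qed.
End Vectors.

Lemma convex_update_le (R : realFieldType) (V : finType) (P : {pred V}) (w rb : V -> R)
    (r0 M mu rho : R) :
  0 < mu -> (forall j, P j -> 0 <= w j) -> (forall j, P j -> rb j <= M) -> r0 <= M ->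
  \sum_(j | P j) w j <= mu -> mu * (rho - r0) = \sum_(j | P j) w j * (rb j - r0) ->
  rho <= M.
Proof.
move=> mu0 w0 rbM r0M wmu upd.
have : mu * (rho - r0) <= mu * (M - r0).
  rewrite upd; apply: (@le_trans _ _ (\sum_(j | P j) w j * (M - r0))).
  - by apply: ler_sum => j Pj; rewrite ler_wpM2l ?lerD2r ?w0 ?rbM.
  - by rewrite -mulr_suml ler_wpM2r // subr_ge0.
by rewrite ler_pM2l // lerD2r.
Qed.

Section LowOrderUpdate.
Variables (R : realType) (d : nat) (b : R) (p : state R d -> R) (V : finType).
Variables (c : V -> V -> vec R d) (lamhat : vec R d -> state R d -> state R d -> R).
Variable U : V -> state R d.
Hypothesis lamhat_gt0 : forall nv W1 W2, 0 < lamhat nv W1 W2.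
Hypothesis lamhat_ge : forall nv W1 W2 lam, normv nv = 1 -> admissible b W1 -> admissible b W2 ->
  riemann_maxspeed b (ext_of b p nv W1) (ext_of b p nv W2) lam -> lam <= lamhat nv W1 W2.
Hypothesis U_adm : forall k, admissible b (U k).
Hypothesis p_gt0 : forall k, 0 < p (U k).

Lemma dLow_gt0 i j : (exists q, c i j q != 0) -> 0 < dLow lamhat c U i j.
Proof.
by move=> /dotv_gt0 cc; rewrite /dLow lt_max mulr_gt0 ?sqrtr_gt0.
Qed.

Lemma rhobar_covolume i j : (exists q, c i j q != 0) -> j != i ->
  b * rhobar lamhat c U i j <= 1.
Proof.
move=> cij ji; set nv := nij (c i j).
have n1 : normv nv = 1 := normv_nij cij.
have N0 : 0 < normv (c i j) by rewrite sqrtr_gt0 dotv_gt0.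
have D0 := dLow_gt0 cij.
have nd k : nondeg b (ext_of b p nv (U k)) by apply: ext_of_nondeg; rewrite ?dotv_unit.
have [lam ms] := riemann_maxspeed_exists (nd i) (nd j).
set lam' := dLow lamhat c U i j / normv (c i j).
have lam'0 : 0 < lam' by rewrite divr_gt0.
have : lam <= lam'.
  apply: le_trans (lamhat_ge n1 (U_adm i) (U_adm j) ms) _.
  by rewrite ler_pdivlMr // /dLow le_max lexx.
(* [rhobar] is the average of the two states weighted by their relative speeds
   with respect to [lam'], which dominates the maximal wave speed *)
move=> /(riemann_maxspeed_covolume ms); rewrite /x_u /= !dotv_nij.
have -> : rhobar lamhat c U i j =
    (st_rho (U i) * (lam' + dotv (st_M (U i)) (c i j) / normv (c i j) / st_rho (U i))
     + st_rho (U j) * (lam' - dotv (st_M (U j)) (c i j) / normv (c i j) / st_rho (U j)))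
    / (2 * lam').
  have [[ri0 _] [rj0 _]] := (U_adm i, U_adm j).
  by rewrite /rhobar (negbTE ji) /lam'; field; rewrite !gt_eqF.
by rewrite mulrA ler_pdivrMr ?mul1r // mulr_gt0.
Qed.

(* As the [c i j] sum to zero, the fluxes [M_j . c_ij] may be replaced by
   [(M_j - M_i) . c_ij], which is what [rhobar] is built from. *)
Lemma low_order_density_eq (I : {set V}) (mi tau rhoL : R) i :
  i \in I -> (forall q, \sum_(j in I) c i j q = 0) ->
  (forall j, j \in I -> j != i -> dLow lamhat c U i j != 0) ->
  mi / tau * (rhoL - st_rho (U i)) + \sum_(j in I) dotv (st_M (U j)) (c i j)
    - \sum_(j in I | j != i) dLow lamhat c U i j * (st_rho (U j) - st_rho (U i)) = 0 ->
  mi / tau * (rhoL - st_rho (U i))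
    = \sum_(j in I | j != i) 2 * dLow lamhat c U i j * (rhobar lamhat c U i j - st_rho (U i)).
Proof.
move=> iI csum D0 upd.
have flux0 : \sum_(j in I) dotv (st_M (U i)) (c i j) = 0.
  rewrite /dotv exchange_big /=; apply: big1 => k _.
  by rewrite -mulr_sumr csum mulr0.
have flux : \sum_(j in I) dotv (st_M (U j)) (c i j)
    = \sum_(j in I | j != i) (dotv (st_M (U j)) (c i j) - dotv (st_M (U i)) (c i j)).
  rewrite -[LHS]subr0 -[X in _ - X]flux0 -sumrB (bigD1 i iI) /= subrr add0r.
  by apply: eq_bigl => j; rewrite andbC.
have terms : \sum_(j in I | j != i) 2 * dLow lamhat c U i j * (rhobar lamhat c U i j - st_rho (U i))
    = \sum_(j in I | j != i) (dLow lamhat c U i j * (st_rho (U j) - st_rho (U i))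
        - (dotv (st_M (U j)) (c i j) - dotv (st_M (U i)) (c i j))).
  apply: eq_bigr => j /andP[jI ji]; have := D0 j jI ji.
  by rewrite /rhobar (negbTE ji) => Dij; field.
by rewrite terms sumrB -flux; lra.
Qed.
End LowOrderUpdate.

Theorem lemma4p3 (R : realType) (d : nat) (b : R) (p : state R d -> R)
  (V : finType) (I : V -> {set V}) (m : V -> R) (c : V -> V -> vec R d) (tau : R)
  (lamhat : vec R d -> state R d -> state R d -> R) (U : V -> state R d) (i : V) :
  (0 < d)%N -> 0 <= b ->
  (forall W : state R d, admissible b W -> 0 <= p W) ->
  (forall k, k \in I k) ->
  (forall k, 0 < m k) ->
  (forall k l q, c k l q = - c l k q) ->
  (forall k q, \sum_(l in I k) c k l q = 0) ->
  (forall k l, l \in I k -> l != k -> exists q, c k l q != 0) ->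
  0 < tau ->
  (forall nv W1 W2, 0 < lamhat nv W1 W2) ->
  (forall nv W1 W2 lam, normv nv = 1 -> admissible b W1 -> admissible b W2 ->
     riemann_maxspeed b (ext_of b p nv W1) (ext_of b p nv W2) lam ->
     lam <= lamhat nv W1 W2) ->
  (forall k, admissible b (U k)) ->
  (forall k, 0 < p (U k)) ->
  (* (i) *)
  (forall j, j \in I i ->
     forall rho : R -> R -> R,
       riemann_density b (ext_of b p (nij (c i j)) (U i)) (ext_of b p (nij (c i j)) (U j)) rho ->
       forall x t, 0 < t ->
         rho x t <= Num.max (tau_inf b (gam b p (U i)) (st_rho (U i)))^-1
                            (tau_inf b (gam b p (U j)) (st_rho (U j)))^-1
         /\ Num.max (tau_inf b (gam b p (U i)) (st_rho (U i)))^-1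
                    (tau_inf b (gam b p (U j)) (st_rho (U j)))^-1
            = Num.max (rho_lim b (gam b p (U i)) (st_rho (U i)))
                      (rho_lim b (gam b p (U j)) (st_rho (U j))))
  /\
  (* (ii) *)
  (tau * (\sum_(j in I i | j != i) 2 * dLow lamhat c U i j / m i) <= 1 ->
   forall rhoL : R,
     m i / tau * (rhoL - st_rho (U i))
       + \sum_(j in I i) dotv (st_M (U j)) (c i j)
       - \sum_(j in I i | j != i) dLow lamhat c U i j * (st_rho (U j) - st_rho (U i)) = 0 ->
     rhoL <= rho_lim b (\big[Num.min/gam b p (U i)]_(j in I i) gam b p (U j))
                       (\big[Num.max/rhobar lamhat c U i i]_(j in I i) rhobar lamhat c U i j)).
Proof.
move=> _ b0 _ ii m0 _ csum cnz tau0 lam0 lamub adm ppos.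
have gam1 k : 1 < gam b p (U k) := gam_gt1 (adm k) (ppos k).
have rho0 k : 0 < st_rho (U k) by case: (adm k).
split=> [j _ rho rsol x t t0 | cfl rhoL upd].
  rewrite !tau_infV //; split=> //.
  by have := riemann_density_le b0 x rsol t0; rewrite /= !ext_of_g ?gt_eqF.
set rmax := \big[Num.max/_]_(j in I i) _; set gmin := \big[Num.min/_]_(j in I i) _.
have rhobar_le j : j \in I i -> rhobar lamhat c U i j <= rmax by move=> jI; apply: le_bigmax_cond.
have rhoi_le : st_rho (U i) <= rmax by have := rhobar_le i (ii i); rewrite /rhobar eqxx.
have brhoi : b * rhobar lamhat c U i i <= 1.
  by rewrite /rhobar eqxx; have [_ []] := adm i; lra.
have brmax : b * rmax <= 1.
  rewrite /rmax; elim/big_ind: _ => [||j jI] //.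
    by move=> x y bx1 by1; rewrite maxEle; case: ifP.
  have [->|ji] := eqVneq j i => //.
  exact: (rhobar_covolume lam0 lamub adm ppos (cnz i j jI ji) ji).
have gmin1 : 1 < gmin by apply: lt_bigmin.
apply: le_trans (rho_lim_ge b0 (lt_le_trans (rho0 i) rhoi_le) brmax gmin1).
have D0 j : j \in I i -> j != i -> 0 < dLow lamhat c U i j.
  by move=> jI ji; have := dLow_gt0 U lam0 (cnz i j jI ji).
apply: (convex_update_le (P := [pred j | (j \in I i) && (j != i)]) _ _ _ rhoi_le _
          (low_order_density_eq (ii i) (csum i) _ upd)).
- by rewrite divr_gt0.
- by move=> j /andP[jI ji]; rewrite mulr_ge0 // ltW // D0.
- by move=> j /andP[jI _]; apply: rhobar_le.
- by move: cfl; rewrite -mulr_suml mulrA ler_pdivrMr // mul1r ler_pdivlMr // mulrC.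
- by move=> j jI ji; rewrite gt_eqF // D0.
Qed.
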